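(* Let $\mathcal{G}=(V,L)$ be a finite connected undirected graph with monitor set $M\subseteq V$ and non-monitor set $N=V\setminus M$, $\sigma=|N|$, and let the measurement paths $P$ be given by Controllable Arbitrary-path Probing (CAP). Let $S\subseteq N$ be nonempty and let $k$ be an integer with $1\le k\le\sigma$. Then $S$ is $k$-identifiable if and only if $\Gamma_{\mathcal{G}^*}(S,m')\ge k$.
   Context: Failure model: a failure set is any $F\subseteq N$ (monitors never fail). A measurement path fails iff it traverses at least one node of $F$. For a set of measurement paths $P$ and $F\subseteq N$, $P_F$ denotes the set of paths in $P$ traversing at least one node of $F$. Two failure sets $F_1,F_2$ are distinguishable iff $P_{F_1}\neq P_{F_2}$. A set $S\subseteq N$ is $k$-identifiable if any two failure sets $F_1,F_2\subseteq N$ with $|F_1|\le k$, $|F_2|\le k$ and $F_1\cap S\neq F_2\cap S$ are distinguishable. Under CAP, $P$ consists of all walks in $\mathcal{G}$ (paths or cycles, repeated nodes and links allowed) that start and end at monitors (possibly the same monitor). $\mathcal{N}(M)$ denotes the set of non-monitors adjacent to at least one monitor. The auxiliary graph $\mathcal{G}^*$ is obtained from $\mathcal{G}$ by deleting all monitors (and their incident links), adding a new virtual node $m'$, and adding a link between $m'$ and every node of $\mathcal{N}(M)$. For nodes $s,t$ of a graph $\mathcal{H}$, the $(s,t)$-vertex-cut $C_{\mathcal{H}}(s,t)$ is a minimum-cardinality set of nodes (other than $s,t$) whose deletion destroys all paths from $s$ to $t$; if $s$ and $t$ are adjacent, $C_{\mathcal{H}}(s,t):=V(\mathcal{H})\setminus\{t\}$.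 For a node set $S$ and a node $m\notin S$, $\Gamma_{\mathcal{H}}(S,m):=\min_{w\in S}|C_{\mathcal{H}}(w,m)|$. *)

From mathcomp Require Import all_boot.
Set Implicit Arguments. Unset Strict Implicit. Unset Printing Implicit Defensive.

Section Defs.
Variable V : finType.

Definition simple_graph (e : rel V) : Prop := symmetric e /\ irreflexive e.
Definition graph_connected (e : rel V) : Prop := forall x y : V, connect e x y.

Definition nonmon (M : {set V}) : {set V} := ~: M.

(* CAP measurement paths: walks x :: p (consecutive nodes adjacent, repetitions
   allowed) starting and ending at monitors. *)
Definition cap_walk (e : rel V) (M : {set V}) (w : V * seq V) : bool :=
  [&& path e w.1 w.2, w.1 \in M & last w.1 w.2 \in M].

Definition PF (e : rel V) (M : {set V}) (F : {set V}) : pred (V * seq V) :=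
  fun w => cap_walk e M w && has (fun v => v \in F) (w.1 :: w.2).

Definition distinguishable e M (F1 F2 : {set V}) : Prop :=
  ~ (PF e M F1 =1 PF e M F2).

Definition k_identifiable e M (S : {set V}) (k : nat) : Prop :=
  forall F1 F2 : {set V},
    F1 \subset nonmon M -> F2 \subset nonmon M ->
    #|F1| <= k -> #|F2| <= k -> F1 :&: S != F2 :&: S ->
    distinguishable e M F1 F2.

Definition nbrM e (M : {set V}) : {set V} :=
  [set v in nonmon M | [exists m in M, e v m]].

(* Auxiliary graph G*: vertices Some v (v in N) and the virtual node None = m'. *)
Definition star_vertices (M : {set V}) : {set option V} :=
  None |: [set Some v | v in nonmon M].

Definition star_rel e (M : {set V}) : rel (option V) :=
  fun x y => match x, y with
  | Some a, Some b => [&& e a b, a \in nonmon M & b \in nonmon M]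
  | None, Some b => b \in nbrM e M
  | Some a, None => a \in nbrM e M
  | None, None => false
  end.
End Defs.

(* General graph H with vertex set D inside a finType T and adjacency h. *)
Section Cut.
Variable T : finType.

Definition separates (D : {set T}) (h : rel T) (X : {set T}) (s t : T) : bool :=
  ~~ connect [rel x y | [&& h x y, x \in D :\: X & y \in D :\: X]] s t.

(* |C_H(s,t)|: minimum size of an (s,t)-vertex-cut (nodes of H other than
   s, t); by convention |V(H) \ {t}| if s and t are adjacent. *)
Definition vcut_size (D : {set T}) (h : rel T) (s t : T) : nat :=
  if h s t then #|D :\ t|
  else \big[minn/#|D|]_(X : {set T} | (X \subset D :\: [set s; t]) && separates D h X s t) #|X|.

Definition Gamma (D : {set T}) (h : rel T) (S : {set T}) (m : T) : nat :=
  \big[minn/#|D|]_(w in S) vcut_size D h w m.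
End Cut.

From mathcomp Require Import all_boot.
Set Implicit Arguments. Unset Strict Implicit. Unset Printing Implicit Defensive.

(* Deleting a set C of non-monitors, a non-monitor v outside C lies on a
   measurement path avoiding C iff v is connected to a monitor in G - C, iff
   v is connected to m' in G* - C.  Hence a cut C of size < k between some
   w in S and m' makes the failure sets C and C + w indistinguishable.
   Conversely, let F1, F2 be indistinguishable with w in F2 \ F1, and let R be
   the part of G reachable from the monitors without crossing F1.  Every node
   of F1 adjacent to R lies in F2 (a measurement path can make a detour through
   it), w lies outside R, and these boundary nodes separate w from m' in G*,
   so Gamma <= |boundary| < |F2| <= k. *)

Lemma bigmin_leq (I : eqType) (r : seq I) (P : pred I) (F : I -> nat) idx j :
  j \in r -> P j -> \big[minn/idx]_(i <- r | P i) F i <= F j.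
Proof.
elim: r => // a r IHr; rewrite inE big_cons => /orP[/eqP <- -> | jr Pj].
  exact: geq_minl.
by case: ifP => _; [rewrite geq_min IHr ?orbT | exact: IHr].
Qed.

Lemma leq_bigmin (I : Type) (r : seq I) (P : pred I) (F : I -> nat) idx k :
  k <= idx -> (forall i, P i -> k <= F i) -> k <= \big[minn/idx]_(i <- r | P i) F i.
Proof.
by move=> k_idx kF; apply: (big_ind (leq k)) => // x y; rewrite leq_min => -> ->.
Qed.

Section MinVertexCut.
Variables (T : finType) (D : {set T}) (h : rel T).

Definition del_rel (X : {set T}) : rel T :=
  [rel x y | [&& h x y, x \in D :\: X & y \in D :\: X]].

Lemma del_rel_sym (X : {set T}) : symmetric h -> symmetric (del_rel X).
Proof. by move=> h_sym x y; rewrite /del_rel /= h_sym [(x \in _) && _]andbC. Qed.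

Lemma separatesE (X : {set T}) s t : separates D h X s t = ~~ connect (del_rel X) s t.
Proof. by []. Qed.

Lemma vcut_size_le (X : {set T}) s t :
  ~~ h s t -> X \subset D :\: [set s; t] -> separates D h X s t ->
  vcut_size D h s t <= #|X|.
Proof.
rewrite /vcut_size => /negbTE-> Xst sep.
by apply: bigmin_leq; rewrite ?mem_index_enum ?Xst.
Qed.

Lemma vcut_size_ge k s t :
  k <= #|D :\ t| ->
  (forall X : {set T}, X \subset D :\: [set s; t] -> separates D h X s t -> k <= #|X|) ->
  k <= vcut_size D h s t.
Proof.
move=> kD kX; rewrite /vcut_size; case: ifP => // _.
apply: leq_bigmin => [|X /andP[]]; last exact: kX.
by rewrite (leq_trans kD) ?subset_leq_card ?subsetDl.
Qed.

Lemma Gamma_le (S : {set T}) m w : w \in S -> Gamma D h S m <= vcut_size D h w m.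
Proof. exact: bigmin_leq (mem_index_enum w). Qed.

Lemma Gamma_ge k (S : {set T}) m :
  k <= #|D| -> {in S, forall w, k <= vcut_size D h w m} -> k <= Gamma D h S m.
Proof. exact: leq_bigmin. Qed.

End MinVertexCut.

Section Probing.
Variables (V : finType) (e : rel V) (M : {set V}).
Hypothesis e_sym : symmetric e.
Implicit Types (F C S : {set V}) (m u v w x : V) (p q : seq V).

Local Notation N := (nonmon M).

Definition avoid (F : {set V}) : rel V :=
  [rel a b | [&& e a b, a \notin F & b \notin F]].

Definition reach (F : {set V}) : {set V} :=
  [set u | [exists m in M, connect (avoid F) m u]].

Definition boundary (F : {set V}) : {set V} :=
  [set y in F | [exists z in reach F, e z y]].

Lemma avoid_sym F : symmetric (avoid F).
Proof. by move=> a b; rewrite /avoid /= e_sym [(a \notin F) && _]andbC. Qed.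

Lemma path_avoidE F x p :
  x \notin F -> path (avoid F) x p = path e x p && all [pred y | y \notin F] p.
Proof.
elim: p x => [|a p IHp] x xF //=.
have -> : avoid F x a = e x a && (a \notin F) by rewrite /avoid /= xF.
by case aF: (a \in F); rewrite /= ?andbF // IHp ?aF // andbT andbA.
Qed.

Lemma monitor_notin F m : F \subset N -> m \in M -> m \notin F.
Proof. by move=> FN mM; apply: contraL mM => /(subsetP FN); rewrite inE. Qed.

Lemma reach_notin F u : F \subset N -> u \in reach F -> u \notin F.
Proof.
move=> FN; rewrite inE => /exists_inP[m mM /connectP[p pth ->]].
have mF := monitor_notin FN mM.
have : all [pred y | y \notin F] (m :: p).
  by move: pth; rewrite path_avoidE //= mF => /andP[].
by move/allP; apply; exact: mem_last.
Qed.

Lemma reach_of_walk F x p u :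
  cap_walk e M (x, p) -> ~~ has (fun y => y \in F) (x :: p) -> u \in x :: p ->
  u \in reach F.
Proof.
case/and3P; rewrite -all_predC /= => pth xM _ /andP[xF pF] up.
rewrite inE; apply/exists_inP; exists x => //.
by apply: path_connect up; rewrite path_avoidE // pth.
Qed.

Lemma reach_loop F u : F \subset N -> u \in reach F ->
  exists m p q, [/\ cap_walk e M (m, p ++ q), last m p = u
                   & ~~ has (fun y => y \in F) (m :: p ++ q)].
Proof.
move=> FN uR; have uF := reach_notin FN uR.
move: uR; rewrite inE => /exists_inP[m mM mu].
have um : connect (avoid F) u m by rewrite (sym_connect_sym (avoid_sym F)).
case/connectP: mu => p pmu uE; case/connectP: um => q qum mE.
have mF := monitor_notin FN mM.
move: pmu qum; rewrite !path_avoidE // => /andP[pe pF] /andP[qe qF].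
exists m, p, q; split=> //; last by rewrite -all_predC /= mF all_cat pF.
by rewrite /cap_walk /= cat_path last_cat -uE pe qe -mE mM.
Qed.

Lemma nbrM_reach F v : F \subset N -> v \in nbrM e M -> v \notin F -> v \in reach F.
Proof.
move=> FN; rewrite inE => /andP[_ /exists_inP[m mM evm]] vF.
rewrite inE; apply/exists_inP; exists m => //; apply: connect1.
by rewrite /avoid /= e_sym evm vF monitor_notin.
Qed.

Lemma reach_avoid_step F x y : x \in reach F -> avoid F x y -> y \in reach F.
Proof.
rewrite !inE => /exists_inP[m mM mx] xy; apply/exists_inP; exists m => //.
exact: connect_trans mx (connect1 xy).
Qed.

Section Indistinguishable.
Variables F1 F2 : {set V}.
Hypotheses (F1N : F1 \subset N) (same : PF e M F1 =1 PF e M F2).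

Lemma PF_avoid x p : cap_walk e M (x, p) ->
  ~~ has (fun y => y \in F1) (x :: p) -> ~~ has (fun y => y \in F2) (x :: p).
Proof. by move=> W; move: (same (x, p)); rewrite /PF W !andTb => ->. Qed.

Lemma reach_notin_PF u : u \in reach F1 -> u \notin F2.
Proof.
case/(reach_loop F1N) => m [p [q [W uE F1W]]].
move: (PF_avoid W F1W); apply: contra => uF2; apply/hasP; exists u => //.
by rewrite -cat_cons mem_cat -uE mem_last.
Qed.

Lemma boundary_subset : boundary F1 \subset F2.
Proof.
apply/subsetP => y; rewrite inE => /andP[yF1 /exists_inP[z zR ezy]].
case/(reach_loop F1N): zR => m [p [q [W zE F1W]]].
(* detour z -> y -> z: y is the only node of this walk that can lie in F2 *)
have W' : cap_walk e M (m, p ++ y :: z :: q).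
  by move: W; rewrite /cap_walk /= !cat_path !last_cat /= zE ezy [e y z]e_sym ezy.
have : has (fun x => x \in F2) (m :: p ++ y :: z :: q).
  move: (same (m, p ++ y :: z :: q)); rewrite /PF W' !andTb => <-.
  by apply/hasP; exists y; rewrite // -cat_cons mem_cat mem_head orbT.
case/hasP => x; rewrite -cat_cons mem_cat [x \in y :: _]in_cons.
case: (eqVneq x y) => [-> // | _ xW xF2].
suff : x \in m :: p ++ q by move/(hasPn (PF_avoid W F1W)); rewrite xF2.
rewrite -cat_cons mem_cat; case/orP: xW => [-> // | ].
by rewrite orFb inE => /orP[/eqP-> | ->]; rewrite ?orbT // -zE mem_last.
Qed.

End Indistinguishable.

Lemma PF_setU1 C w : w \notin reach C -> PF e M C =1 PF e M (w |: C).
Proof.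
move=> wR [x p]; rewrite /PF.
case: (boolP (cap_walk e M (x, p))) => W; rewrite ?andFb ?andTb //.
case hC: (has _ _).
  by apply: esym; apply: sub_has hC => y yC; rewrite in_setU1 yC orbT.
apply: esym; rewrite -hC; apply: eq_in_has => y yW; rewrite in_setU1.
case: eqP => // yw; case/negP: wR; rewrite -yw.
exact: reach_of_walk W (negbT hC) yW.
Qed.

Lemma reach_boundary F : F \subset N -> reach (boundary F) \subset reach F.
Proof.
move=> FN; have closedR : closed (avoid (boundary F)) (reach F).
  apply: intro_closed; first exact/sym_connect_sym/avoid_sym.
  move=> x y /and3P[exy _ yB] xR; have xF := reach_notin FN xR.
  have yF : y \notin F.
    by apply: contra yB => yF; rewrite inE yF; apply/exists_inP; exists x.
  by apply: reach_avoid_step xR _; rewrite /avoid /= exy xF.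
apply/subsetP => u; rewrite inE => /exists_inP[m mM /(closed_connect closedR) <-].
by rewrite inE; apply/exists_inP; exists m.
Qed.

Local Notation D := (star_vertices M).
Local Notation star X := (del_rel D (star_rel e M) X).

Lemma star_rel_sym : symmetric (star_rel e M).
Proof. by case=> [a|] [b|] //=; rewrite e_sym [(a \in _) && _]andbC. Qed.

Lemma mem_star_Some v : (Some v \in D) = (v \in N).
Proof. by rewrite in_setU1 /= (mem_imset _ _ Some_inj). Qed.

Lemma card_star_verticesD1 : #|D :\ None| = #|N|.
Proof.
suff -> : D :\ None = Some @: N by exact: card_imset Some_inj.
apply/setP => -[v|].
  by rewrite in_setD1 mem_star_Some (mem_imset _ _ Some_inj).
by rewrite in_setD1 eqxx; apply/esym/imsetP => -[].
Qed.

Lemma mem_star_del C v : (Some v \in D :\: Some @: C) = (v \in N :\: C).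
Proof. by rewrite !in_setD mem_star_Some (mem_imset _ _ Some_inj) andbC. Qed.

Lemma star_del_None C : None \in D :\: Some @: C.
Proof. by rewrite in_setD in_setU1 eqxx andbT; apply/imsetP => -[]. Qed.

Lemma star_delSS C a b :
  star (Some @: C) (Some a) (Some b) = [&& e a b, a \in N :\: C & b \in N :\: C].
Proof.
rewrite /del_rel /= !mem_star_del !in_setD.
by case: (a \in N); case: (b \in N); rewrite /= ?andbF ?andbT.
Qed.

Lemma star_delSN C a :
  star (Some @: C) (Some a) None = (a \in nbrM e M) && (a \notin C).
Proof.
rewrite /del_rel /= mem_star_del star_del_None andbT in_setD.
by case aM: (a \in nbrM e M); move: aM; rewrite //= inE => /andP[->]; rewrite andbT.
Qed.

Lemma connect_star_reach C v : C \subset N -> v \in N :\: C ->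
  connect (star (Some @: C)) (Some v) None = (v \in reach C).
Proof.
move=> CN vNC; apply/idP/idP.
  pose A := [pred x : option V | if x is Some u then u \in reach C else true].
  have closedA : closed (star (Some @: C)) A.
    apply: intro_closed; first exact/sym_connect_sym/del_rel_sym/star_rel_sym.
    move=> [a|] [b|] //; first rewrite star_delSS.
      by case/and3P=> eab /setDP[_ aC] /setDP[_ bC] /reach_avoid_step; apply; apply/and3P.
    rewrite del_rel_sym ?star_delSN; last exact: star_rel_sym.
    by case/andP=> bM bC _; apply: nbrM_reach.
  by move/(closed_connect closedA).
pose A := [pred u | (u \in M) || connect (star (Some @: C)) (Some u) None].
have closedA : closed (avoid C) A.
  apply: intro_closed; first exact/sym_connect_sym/avoid_sym.
  move=> a b /and3P[eab aC bC]; rewrite !inE; case bM: (b \in M) => //=.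
  have bNC : b \in N :\: C by rewrite !inE bM bC.
  case: (boolP (a \in M)) => [aM _ | aM /= aNone]; last first.
    by apply: connect_trans aNone; apply: connect1; rewrite star_delSS e_sym eab bNC !inE aM aC.
  apply: connect1; rewrite star_delSN bC andbT !inE bM /=.
  by apply/exists_inP; exists a; rewrite // e_sym.
rewrite inE => /exists_inP[m mM /(closed_connect closedA)].
by rewrite !inE mM; move: vNC; rewrite !inE => /andP[_ /negbTE->].
Qed.

Lemma separates_star C v : C \subset N -> v \in N :\: C ->
  separates D (star_rel e M) (Some @: C) (Some v) None = (v \notin reach C).
Proof. by move=> CN vNC; rewrite separatesE connect_star_reach. Qed.

Lemma Gamma_ge_of_identifiable S k : S \subset N -> k <= #|N| ->
  k_identifiable e M S k -> k <= Gamma D (star_rel e M) (Some @: S) None.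
Proof.
move=> SN kN kid; have kD : k <= #|D :\ None| by rewrite card_star_verticesD1.
apply: Gamma_ge => [|_ /imsetP[w wS ->]].
  by rewrite (leq_trans kD) ?subset_leq_card ?subsetDl.
have wN := subsetP SN w wS.
apply: vcut_size_ge => // X Xcut sep; set C := [set v | Some v \in X].
have XE : X = Some @: C.
  apply/setP => -[v|]; first by rewrite (mem_imset _ _ Some_inj) inE.
  apply/idP/imsetP => [/(subsetP Xcut) | [v _] //].
  by rewrite !inE eqxx orbT.
have CN : C \subset N.
  by apply/subsetP => v; rewrite inE => /(subsetP Xcut); rewrite in_setD mem_star_Some => /andP[].
have wC : w \notin C.
  by rewrite inE; apply/negP => /(subsetP Xcut); rewrite !inE eqxx.
have wNC : w \in N :\: C by rewrite in_setD wC wN.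
rewrite XE separates_star // in sep.
rewrite XE card_imset; last exact: Some_inj.
rewrite leqNgt; apply/negP => Ck; apply: (kid C (w |: C)) => //.
- by rewrite subUset sub1set wN.
- exact: ltnW.
- by rewrite cardsU1 wC.
- by apply/eqP => /setP/(_ w); rewrite !in_setI in_setU1 eqxx wS (negbTE wC).
- exact: PF_setU1.
Qed.

Lemma Gamma_lt_card S F1 F2 w : S \subset N -> F1 \subset N ->
  PF e M F1 =1 PF e M F2 -> w \in S -> w \in F2 -> w \notin F1 ->
  Gamma D (star_rel e M) (Some @: S) None < #|F2|.
Proof.
move=> SN F1N same wS wF2 wF1; have wN := subsetP SN w wS.
set B := boundary F1.
have BF1 : B \subset F1 by apply/subsetP => y; rewrite inE => /andP[].
have BN := subset_trans BF1 F1N.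
have wB : w \notin B := contra (subsetP BF1 w) wF1.
have wR : w \notin reach F1 := contraL (@reach_notin_PF F1 F2 F1N same w) wF2.
have sep : separates D (star_rel e M) (Some @: B) (Some w) None.
  rewrite separates_star ?in_setD ?wB ?wN //.
  exact: contra (subsetP (reach_boundary F1N) w) wR.
have nadj : ~~ star_rel e M (Some w) None.
  exact: contra (fun wM => nbrM_reach F1N wM wF1) wR.
have Bcut : Some @: B \subset D :\: [set Some w; None].
  apply/subsetP => _ /imsetP[y yB ->].
  rewrite in_setD mem_star_Some (subsetP BN) // andbT !inE (inj_eq Some_inj) orbF.
  by apply: contraNneq wB => <-.
have BF2 : w |: B \subset F2 by rewrite subUset sub1set wF2 (boundary_subset F1N same).
apply: leq_ltn_trans (Gamma_le _ _ _ (imset_f Some wS)) _.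
apply: leq_ltn_trans (vcut_size_le nadj Bcut sep) _.
rewrite card_imset; last exact: Some_inj.
by apply: leq_trans (subset_leq_card BF2); rewrite cardsU1 wB.
Qed.

End Probing.

Theorem theorem1 (V : finType) (e : rel V) (M : {set V}) (S : {set V}) (k : nat) :
  simple_graph e -> graph_connected e ->
  S \subset nonmon M -> S != set0 ->
  1 <= k <= #|nonmon M| ->
  (k_identifiable e M S k <->
   k <= Gamma (star_vertices M) (star_rel e M) (Some @: S) None).
Proof.
move=> [e_sym _] _ SN _ /andP[_ kN]; split; first exact: Gamma_ge_of_identifiable.
move=> kG F1 F2 F1N F2N F1k F2k /eqP neqS same.
have /exists_inP[w wS wF] : [exists w in S, (w \in F1) != (w \in F2)].
  apply: contra_notT neqS; rewrite negb_exists_in => /forall_inP noW.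
  apply/setP => x; rewrite !inE; case: (boolP (x \in S)) => xS; rewrite ?andbF ?andbT //.
  by apply/eqP/negPn; apply: noW.
case wF1: (w \in F1) wF; case wF2: (w \in F2) => // _.
  have := leq_ltn_trans kG (Gamma_lt_card e_sym SN F2N (fsym same) wS wF1 (negbT wF2)).
  by rewrite ltnNge F1k.
have := leq_ltn_trans kG (Gamma_lt_card e_sym SN F1N same wS wF2 (negbT wF1)).
by rewrite ltnNge F2k.
Qed.
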